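(* Suppose $t=t(n)=\alpha_0(n)+O(1)$ is an integer. Uniformly over all $k\le n/2$ with $k=n/(t-\Theta(1))$, we have (partial derivatives with $t$ held fixed) \[ \frac{\partial}{\partial k}\hat L_0(n,k,t)=\Theta\Big(\frac{\log^3n}{n}\Big),\qquad \frac{\partial}{\partial n}\hat L_0(n,k,t)=-\Theta\Big(\frac{\log^2 n}{n}\Big), \] and \[ \frac{\partial}{\partial k}L_0(n,k,t)=\frac{2}{\log2}\log^2n+O(\log n\log\log n). \]
   Context: $\alpha_0(n)=2\log_2 n-2\log_2\log_2 n+2\log_2(e/2)+1$, $d_i=2^{\binom i2}i!$. For positive integer $t$ and reals $\rho\in(1,t)$, $k>0$: $\tilde L_0(\rho,k,t)=\sup\{\rho\log(\rho k)-\log k-\rho+1-\sum_{i=1}^tp_i\log(p_id_i)\}$, the supremum over $(p_i)_{i=1}^t\in[0,1]^t$ with $\sum_ip_i=1$, $\sum_iip_i=\rho$ (with $0\log0=0$); $\hat L_0(n,k,t)=\tilde L_0(n/k,k,t)$ and $L_0(n,k,t)=k\,\hat L_0(n,k,t)$. Logarithms are natural. *)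

From Stdlib Require Import Reals Lra.
From Coquelicot Require Import Coquelicot.
Open Scope R_scope.

Definition log2 (x : R) : R := ln x / ln 2.

Definition alpha0 (n : R) : R :=
  2 * log2 n - 2 * log2 (log2 n) + 2 * log2 (exp 1 / 2) + 1.

Definition d (i : nat) : R := 2 ^ (Nat.div (i * (i - 1)) 2) * INR (Factorial.fact i).

Fixpoint sum1 (f : nat -> R) (t : nat) : R :=
  match t with
  | O => 0
  | S t' => sum1 f t' + f (S t')
  end.

Definition xlog (x c : R) : R := if Req_EM_T x 0 then 0 else x * ln (x * c).

Definition admissible (rho : R) (t : nat) (p : nat -> R) : Prop :=
  (forall i, (1 <= i <= t)%nat -> 0 <= p i <= 1) /\
  sum1 p t = 1 /\ sum1 (fun i => INR i * p i) t = rho.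

Definition Lobj (rho k : R) (t : nat) (p : nat -> R) : R :=
  rho * ln (rho * k) - ln k - rho + 1 - sum1 (fun i => xlog (p i) (d i)) t.

Definition Ltilde0 (rho k : R) (t : nat) : R :=
  real (Lub_Rbar (fun v => exists p, admissible rho t p /\ v = Lobj rho k t p)).

Definition Lhat0 (n k : R) (t : nat) : R := Ltilde0 (n / k) k t.
Definition L0 (n k : R) (t : nat) : R := k * Lhat0 n k t.

(* Gibbs' inequality shows that the supremum defining [Ltilde0 rho k t] is attained at the
   tilted law [gibbs lam t] (weights [exp (- lam i) / d i]) of mean [rho]. Hence, with
   [rho = n / k], [Lhat0 = rho ln n - ln k - rho + 1 + max_entropy rho], where [max_entropy] is
   the Legendre transform of [lam |-> ln (partition lam t)], so its derivative at [mean lam t]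
   is [lam]. This gives
     d/dk Lhat0 = rho (rho (1 - lam - ln n) - 1) / n,   d/dn Lhat0 = (ln n + lam) / k,
     d/dk L0 = ln (partition lam t) - ln k.
   When [t - rho = Theta(1)] the tilted law lives on the top O(1) indices, which pins
   [lam = - (t - 1) ln 2 - ln t + O(1)]. As [t ln 2 = 2 ln n + O(ln ln n)], this makes
   [1 - lam - ln n = Theta(ln n)], whence the first two estimates, and
   [ln (partition lam t) = ln (weight lam t) + O(t) = t^2 ln 2 / 2 + O(t ln t)] yields the main
   term [2 ln^2 n / ln 2] of the third. *)

From Stdlib Require Import Reals Lra Lia.
From Coquelicot Require Import Coquelicot.
Open Scope R_scope.

(** * Finite sums and elementary estimates *)

Lemma sum1_ext (f g : nat -> R) t :
  (forall i, (1 <= i <= t)%nat -> f i = g i) -> sum1 f t = sum1 g t.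
Proof.
  induction t as [|t IH]; simpl; intros H; auto.
  rewrite IH, H; auto; [lia | intros; apply H; lia].
Qed.

Lemma sum1_plus f g t : sum1 (fun i => f i + g i) t = sum1 f t + sum1 g t.
Proof. induction t; simpl; [lra | rewrite IHt; lra]. Qed.

Lemma sum1_minus f g t : sum1 (fun i => f i - g i) t = sum1 f t - sum1 g t.
Proof. induction t; simpl; [lra | rewrite IHt; lra]. Qed.

Lemma sum1_scal c f t : sum1 (fun i => c * f i) t = c * sum1 f t.
Proof. induction t; simpl; [lra | rewrite IHt; lra]. Qed.

Lemma sum1_const c t : sum1 (fun _ => c) t = INR t * c.
Proof. induction t; simpl sum1; [simpl; lra | rewrite IHt, S_INR; lra]. Qed.

Lemma sum1_split f a b : sum1 f (a + b) = sum1 f a + sum1 (fun j => f (a + j)%nat) b.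
Proof.
  induction b; simpl; [rewrite Nat.add_0_r; lra|].
  rewrite Nat.add_succ_r; simpl; rewrite IHb; lra.
Qed.

Lemma sum1_le f g t :
  (forall i, (1 <= i <= t)%nat -> f i <= g i) -> sum1 f t <= sum1 g t.
Proof.
  induction t as [|t IH]; simpl; intros H; [lra|].
  assert (f (S t) <= g (S t)) by (apply H; lia).
  assert (sum1 f t <= sum1 g t) by (apply IH; intros; apply H; lia).
  lra.
Qed.

Lemma sum1_lt f g t j : (1 <= j <= t)%nat ->
  (forall i, (1 <= i <= t)%nat -> f i <= g i) -> f j < g j -> sum1 f t < sum1 g t.
Proof.
  induction t as [|t IH]; simpl; intros Hj H Hs; [lia|].
  destruct (Nat.eq_dec j (S t)) as [->|Hn].
  - assert (sum1 f t <= sum1 g t) by (apply sum1_le; intros; apply H; lia). lra.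
  - assert (f (S t) <= g (S t)) by (apply H; lia).
    assert (sum1 f t < sum1 g t) by (apply IH; auto; [lia | intros; apply H; lia]).
    lra.
Qed.

Lemma sum1_ub f t c : (forall i, (1 <= i <= t)%nat -> f i <= c) -> sum1 f t <= INR t * c.
Proof. intros H; rewrite <- sum1_const; apply sum1_le; auto. Qed.

Lemma sum1_nonneg f t : (forall i, (1 <= i <= t)%nat -> 0 <= f i) -> 0 <= sum1 f t.
Proof.
  intros H. apply Rle_trans with (sum1 (fun _ => 0) t).
  - rewrite sum1_const; lra.
  - apply sum1_le; auto.
Qed.

Lemma sum1_ge_term f t j : (1 <= j <= t)%nat ->
  (forall i, (1 <= i <= t)%nat -> 0 <= f i) -> f j <= sum1 f t.
Proof.
  induction t as [|t IH]; simpl; intros Hj H; [lia|].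
  destruct (Nat.eq_dec j (S t)) as [->|Hn].
  - assert (0 <= sum1 f t) by (apply sum1_nonneg; intros; apply H; lia). lra.
  - assert (0 <= f (S t)) by (apply H; lia).
    assert (f j <= sum1 f t) by (apply IH; [lia | intros; apply H; lia]). lra.
Qed.

Lemma sum1_pos f t : (1 <= t)%nat -> (forall i, (1 <= i <= t)%nat -> 0 < f i) -> 0 < sum1 f t.
Proof.
  intros Ht H. apply Rlt_le_trans with (f t).
  - apply H; lia.
  - apply sum1_ge_term; [lia | intros; left; auto].
Qed.

Lemma ratio_pow_backward (f : nat -> R) t a : 0 <= a ->
  (forall i, (S i <= t)%nat -> f i <= f (S i) * a) ->
  forall j, (j <= t)%nat -> f (t - j)%nat <= f t * a ^ j.
Proof.
  intros Ha H. induction j as [|j IH]; intros Hj; [rewrite Nat.sub_0_r; simpl; lra|].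
  pose proof (H (t - S j)%nat ltac:(lia)) as Hs.
  replace (S (t - S j)) with (t - j)%nat in Hs by lia.
  pose proof (IH ltac:(lia)). simpl.
  apply Rle_trans with (f (t - j)%nat * a); auto.
  replace (f t * (a * a ^ j)) with (f t * a ^ j * a) by ring. apply Rmult_le_compat_r; auto.
Qed.

Lemma ratio_pow_forward (f : nat -> R) t a J : 0 <= a ->
  (forall i, (t - J <= i)%nat -> (S i <= t)%nat -> f (S i) <= f i * a) ->
  forall j, (j <= J)%nat -> (j <= t)%nat -> f t <= f (t - j)%nat * a ^ j.
Proof.
  intros Ha H. induction j as [|j IH]; intros Hj Hjt; [rewrite Nat.sub_0_r; simpl; lra|].
  pose proof (H (t - S j)%nat ltac:(lia) ltac:(lia)) as Hs.
  replace (S (t - S j)) with (t - j)%nat in Hs by lia.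
  pose proof (IH ltac:(lia) ltac:(lia)). simpl.
  apply Rle_trans with (f (t - j)%nat * a ^ j); auto.
  replace (f (t - S j)%nat * (a * a ^ j)) with (f (t - S j)%nat * a * a ^ j) by ring.
  apply Rmult_le_compat_r; auto. apply pow_le; auto.
Qed.

Lemma ln_le_sub1 x : 0 < x -> ln x <= x - 1.
Proof. intros Hx. pose proof (exp_ineq1_le (ln x)) as H. rewrite exp_ln in H; lra. Qed.

Lemma ln_lt_sub1 x : 0 < x -> x <> 1 -> ln x < x - 1.
Proof.
  intros Hx H1. assert (Hl : ln x <> 0).
  { intro E. apply H1. now rewrite <- (exp_ln x Hx), E, exp_0. }
  pose proof (exp_ineq1 (ln x) Hl) as H. rewrite exp_ln in H; lra.
Qed.

Lemma ln2_bounds : 1 / 2 < ln 2 < 1.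
Proof.
  pose proof (exp_ineq1 1 ltac:(lra)). split.
  - rewrite <- (ln_exp (1 / 2)). apply ln_increasing; [apply exp_pos|].
    assert (exp (1 / 2) * exp (1 / 2) = exp 1) by (rewrite <- exp_plus; f_equal; lra).
    pose proof exp_le_3. pose proof (exp_pos (1 / 2)). nra.
  - rewrite <- (ln_exp 1). apply ln_increasing; lra.
Qed.

Lemma ln_ln2_bounds : -1 < ln (ln 2) < 0.
Proof.
  pose proof ln2_bounds. split.
  - rewrite <- (ln_exp (-1)). apply ln_increasing; [apply exp_pos|].
    assert (exp (-1) * exp 1 = 1)
      by (rewrite <- exp_plus; replace (-1 + 1) with 0 by ring; apply exp_0).
    pose proof (exp_ineq1 1 ltac:(lra)). pose proof (exp_pos (-1)). nra.
  - rewrite <- ln_1. apply ln_increasing; lra.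
Qed.

Lemma ln_16_lt_4 : ln 16 < 4.
Proof.
  pose proof ln2_bounds. replace 16 with (2 ^ 4) by (simpl; lra).
  rewrite ln_pow by lra. simpl. lra.
Qed.

Lemma ln_le_affine x a : 0 < x -> 0 < a -> ln x <= x / a - 1 + ln a.
Proof.
  intros Hx Ha. pose proof (ln_le_sub1 (x / a) ltac:(apply Rdiv_lt_0_compat; auto)) as H.
  rewrite ln_div in H by auto. lra.
Qed.

Lemma ln_le_5_mul x y : 1 <= x <= 5 * y -> 0 <= ln x <= 4 + ln y.
Proof.
  intros Hx. split; [rewrite <- ln_1; apply ln_le; lra|].
  apply Rle_trans with (ln (5 * y)); [apply ln_le; lra|].
  rewrite ln_mult by lra. pose proof (ln_increasing 5 16 ltac:(lra) ltac:(lra)).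
  pose proof ln_16_lt_4. lra.
Qed.

Lemma INR_fact_S i : INR (Factorial.fact (S i)) = INR (S i) * INR (Factorial.fact i).
Proof. rewrite <- mult_INR. f_equal. Qed.

Lemma INR_fact_ge1 i : 1 <= INR (Factorial.fact i).
Proof. apply (le_INR 1). pose proof (Factorial.lt_O_fact i). lia. Qed.

Lemma INR_fact_le_pow i : INR (Factorial.fact i) <= INR i ^ i.
Proof.
  induction i as [|i IH]; [simpl; lra|].
  rewrite INR_fact_S, <- tech_pow_Rmult.
  apply Rmult_le_compat_l; [apply pos_INR|].
  apply Rle_trans with (INR i ^ i); auto.
  apply pow_incr. split; [apply pos_INR | apply le_INR; lia].
Qed.

Lemma d_0 : d 0 = 1.
Proof. unfold d. simpl. lra. Qed.

Lemma d_S i : d (S i) = d i * 2 ^ i * INR (S i).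
Proof.
  unfold d.
  replace (S i * (S i - 1))%nat with (i * (i - 1) + i * 2)%nat by (destruct i; simpl; nia).
  rewrite Nat.div_add, pow_add, INR_fact_S by lia. ring.
Qed.

Lemma d_pos i : 0 < d i.
Proof.
  induction i; [rewrite d_0; lra|].
  rewrite d_S. pose proof (pow_lt 2 i ltac:(lra)). assert (0 < INR (S i)) by (apply lt_0_INR; lia).
  apply Rmult_lt_0_compat; [apply Rmult_lt_0_compat|]; auto; lra.
Qed.

Lemma ln_d t : ln (d t) = INR t * (INR t - 1) / 2 * ln 2 + ln (INR (Factorial.fact t)).
Proof.
  induction t as [|t IH]; [rewrite d_0, ln_1; simpl; rewrite ln_1; field|].
  pose proof (d_pos t). pose proof (pow_lt 2 t ltac:(lra)).
  assert (0 < INR (S t)) by (apply lt_0_INR; lia).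
  pose proof (INR_fact_ge1 t).
  assert (0 < d t * 2 ^ t) by (apply Rmult_lt_0_compat; lra).
  rewrite d_S, !ln_mult, IH, ln_pow, INR_fact_S, ln_mult, S_INR by lra.
  field.
Qed.

(** * Tilted laws and Gibbs' inequality *)

Lemma xlog_le_cross p q c : 0 <= p -> 0 < q -> 0 < c -> - xlog p c + p * ln (q * c) <= q - p.
Proof.
  intros Hp Hq Hc. unfold xlog. destruct (Req_EM_T p 0) as [->|Hn]; [lra|].
  assert (E : p * ln (q * c) - p * ln (p * c) = p * ln (q / p)).
  { rewrite ln_div, !ln_mult by lra. ring. }
  pose proof (ln_le_sub1 (q / p) ltac:(apply Rdiv_lt_0_compat; lra)).
  assert (Hlog : p * ln (q / p) <= p * (q / p - 1)) by (apply Rmult_le_compat_l; lra).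
  replace (p * (q / p - 1)) with (q - p) in Hlog by (field; lra). lra.
Qed.

Lemma xlog_lt_cross p q c : 0 < p -> 0 < q -> 0 < c -> p <> q ->
  - xlog p c + p * ln (q * c) < q - p.
Proof.
  intros Hp Hq Hc Hpq. unfold xlog. destruct (Req_EM_T p 0) as [E|_]; [lra|].
  assert (E : p * ln (q * c) - p * ln (p * c) = p * ln (q / p)).
  { rewrite ln_div, !ln_mult by lra. ring. }
  assert (Hqp : q / p <> 1).
  { intro E1. apply Hpq. replace q with (q / p * p) by (field; lra). rewrite E1. ring. }
  pose proof (ln_lt_sub1 (q / p) ltac:(apply Rdiv_lt_0_compat; lra) Hqp).
  assert (Hlog : p * ln (q / p) < p * (q / p - 1)) by (apply Rmult_lt_compat_l; lra).
  replace (p * (q / p - 1)) with (q - p) in Hlog by (field; lra). lra.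
Qed.

Definition weight (lam : R) (i : nat) : R := exp (- lam * INR i) / d i.
Definition partition (lam : R) (t : nat) : R := sum1 (weight lam) t.
Definition mean (lam : R) (t : nat) : R :=
  sum1 (fun i => INR i * weight lam i) t / partition lam t.
Definition gibbs (lam : R) (t : nat) (i : nat) : R := weight lam i / partition lam t.
Definition entropy (p : nat -> R) (t : nat) : R := - sum1 (fun i => xlog (p i) (d i)) t.

Lemma weight_pos lam i : 0 < weight lam i.
Proof. apply Rdiv_lt_0_compat; [apply exp_pos | apply d_pos]. Qed.

Lemma partition_pos lam t : (1 <= t)%nat -> 0 < partition lam t.
Proof. intros; apply sum1_pos; auto using weight_pos. Qed.

Lemma weight_le_partition lam t : (1 <= t)%nat -> weight lam t <= partition lam t.
Proof. intros; apply sum1_ge_term; [lia | intros; left; apply weight_pos]. Qed.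

Lemma gibbs_pos lam t i : (1 <= t)%nat -> 0 < gibbs lam t i.
Proof. intros; apply Rdiv_lt_0_compat; [apply weight_pos | apply partition_pos; auto]. Qed.

Lemma gibbs_admissible lam t : (1 <= t)%nat -> admissible (mean lam t) t (gibbs lam t).
Proof.
  intros Ht. pose proof (partition_pos lam t Ht). unfold gibbs, mean, Rdiv.
  split; [|split].
  - intros i Hi. pose proof (weight_pos lam i). split; [left; apply Rmult_lt_0_compat;
      auto; apply Rinv_0_lt_compat; lra|].
    apply Rmult_le_reg_r with (partition lam t); auto.
    rewrite Rmult_assoc, Rinv_l, Rmult_1_r, Rmult_1_l by lra.
    apply sum1_ge_term; [auto | intros; left; apply weight_pos].
  - rewrite (sum1_ext _ (fun i => / partition lam t * weight lam i)) by (intros; ring).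
    rewrite sum1_scal. fold (partition lam t). field. lra.
  - rewrite (sum1_ext _ (fun i => / partition lam t * (INR i * weight lam i))) by (intros; ring).
    rewrite sum1_scal. ring.
Qed.

Lemma ln_gibbs_d lam t i : (1 <= t)%nat ->
  ln (gibbs lam t i * d i) = - lam * INR i - ln (partition lam t).
Proof.
  intros Ht. pose proof (partition_pos lam t Ht). pose proof (d_pos i). unfold gibbs, weight.
  replace (exp (- lam * INR i) / d i / partition lam t * d i)
    with (exp (- lam * INR i) / partition lam t) by (field; lra).
  rewrite ln_div, ln_exp by (auto using exp_pos). ring.
Qed.

Lemma sum1_cross_gibbs lam t rho p : (1 <= t)%nat -> admissible rho t p ->
  sum1 (fun i => p i * ln (gibbs lam t i * d i)) t = - lam * rho - ln (partition lam t).
Proof.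
  intros Ht (_ & Hs & Hm).
  rewrite (sum1_ext _ (fun i => - lam * (INR i * p i) + - ln (partition lam t) * p i))
    by (intros; rewrite ln_gibbs_d; auto; ring).
  rewrite sum1_plus, !sum1_scal, Hs, Hm. ring.
Qed.

Lemma gibbs_gap_eq lam t rho p : (1 <= t)%nat -> admissible rho t p ->
  entropy p t - (lam * rho + ln (partition lam t)) =
  sum1 (fun i => - xlog (p i) (d i) + p i * ln (gibbs lam t i * d i) - (gibbs lam t i - p i)) t.
Proof.
  intros Ht Hp. destruct (gibbs_admissible lam t Ht) as (_ & Hq & _).
  rewrite !sum1_minus, sum1_plus, (sum1_cross_gibbs lam t rho p Ht Hp), Hq, (proj1 (proj2 Hp)).
  rewrite (sum1_ext (fun i => - xlog (p i) (d i)) (fun i => -1 * xlog (p i) (d i))), sum1_scal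
    by (intros; ring).
  unfold entropy. ring.
Qed.

Lemma gibbs_inequality lam t rho p : (1 <= t)%nat -> admissible rho t p ->
  entropy p t <= lam * rho + ln (partition lam t).
Proof.
  intros Ht Hp. apply Rminus_le. rewrite gibbs_gap_eq with (rho := rho) by auto.
  apply Rle_trans with (sum1 (fun _ => 0) t); [|rewrite sum1_const; lra].
  apply sum1_le. intros i Hi.
  pose proof (xlog_le_cross (p i) (gibbs lam t i) (d i) (proj1 (proj1 Hp i Hi))
                (gibbs_pos lam t i Ht) (d_pos i)).
  lra.
Qed.

Lemma gibbs_inequality_strict lam t rho p j : (1 <= t)%nat -> admissible rho t p ->
  (1 <= j <= t)%nat -> 0 < p j -> p j <> gibbs lam t j ->
  entropy p t < lam * rho + ln (partition lam t).
Proof.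
  intros Ht Hp Hj Hpj Hne. apply Rminus_lt. rewrite gibbs_gap_eq with (rho := rho) by auto.
  apply Rlt_le_trans with (sum1 (fun _ => 0) t); [|rewrite sum1_const; lra].
  apply sum1_lt with j; auto.
  - intros i Hi.
    pose proof (xlog_le_cross (p i) (gibbs lam t i) (d i) (proj1 (proj1 Hp i Hi))
                  (gibbs_pos lam t i Ht) (d_pos i)).
    lra.
  - pose proof (xlog_lt_cross (p j) (gibbs lam t j) (d j) Hpj (gibbs_pos lam t j Ht) (d_pos j) Hne).
    lra.
Qed.

Lemma entropy_gibbs lam t : (1 <= t)%nat ->
  entropy (gibbs lam t) t = lam * mean lam t + ln (partition lam t).
Proof.
  intros Ht. pose proof (sum1_cross_gibbs lam t _ _ Ht (gibbs_admissible lam t Ht)) as E.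
  unfold entropy. rewrite (sum1_ext _ (fun i => gibbs lam t i * ln (gibbs lam t i * d i))).
  - rewrite E. ring.
  - intros i _. unfold xlog. destruct (Req_EM_T (gibbs lam t i) 0) as [E0|]; auto.
    pose proof (gibbs_pos lam t i Ht). lra.
Qed.

Lemma Ltilde0_mean lam t k : (1 <= t)%nat ->
  Ltilde0 (mean lam t) k t = mean lam t * ln (mean lam t * k) - ln k - mean lam t + 1
                              + (lam * mean lam t + ln (partition lam t)).
Proof.
  intros Ht. unfold Ltilde0.
  match goal with |- _ = ?v => rewrite (is_lub_Rbar_unique _ (Finite v)); [reflexivity|] end.
  split.
  - intros v (p & Hp & ->). simpl. pose proof (gibbs_inequality lam t _ p Ht Hp).
    unfold Lobj, entropy in *. lra.
  - intros b Hb. apply Hb. exists (gibbs lam t). split; [apply gibbs_admissible; auto|].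
    pose proof (entropy_gibbs lam t Ht). unfold Lobj, entropy in *. lra.
Qed.

(** * The Legendre transform and the derivatives *)

Lemma weight_ratio lam i : weight lam i = weight lam (S i) * exp lam * (2 ^ i * INR (S i)).
Proof.
  unfold weight. rewrite d_S, S_INR. pose proof (d_pos i). pose proof (pow_lt 2 i ltac:(lra)).
  pose proof (pos_INR i).
  replace (- lam * (INR i + 1)) with (- lam * INR i + - lam) by ring.
  rewrite exp_plus, exp_Ropp. field. repeat split; try lra. apply exp_neq_0.
Qed.

Lemma gibbs_ratio lam t i : gibbs lam t i = gibbs lam t (S i) * exp lam * (2 ^ i * INR (S i)).
Proof. unfold gibbs. rewrite weight_ratio. unfold Rdiv. ring. Qed.

Lemma gibbs_injective lam1 lam2 t : (1 <= t)%nat ->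
  gibbs lam1 t 1 = gibbs lam2 t 1 -> gibbs lam1 t 2 = gibbs lam2 t 2 -> lam1 = lam2.
Proof.
  intros Ht E1 E2. apply exp_inv.
  rewrite (gibbs_ratio lam1), (gibbs_ratio lam2), E2 in E1.
  pose proof (gibbs_pos lam2 t 2 Ht). simpl in E1.
  apply Rmult_eq_reg_l with (gibbs lam2 t 2); [|lra].
  apply Rmult_eq_reg_r with (2 ^ 1 * (1 + 1)); [simpl in *; lra | simpl; lra].
Qed.

Lemma mean_decreasing lam1 lam2 t : (2 <= t)%nat -> lam1 < lam2 -> mean lam2 t < mean lam1 t.
Proof.
  intros Ht Hl. assert (Ht1 : (1 <= t)%nat) by lia.
  assert (Hj : exists j, (1 <= j <= t)%nat /\ gibbs lam1 t j <> gibbs lam2 t j).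
  { destruct (Req_EM_T (gibbs lam1 t 1) (gibbs lam2 t 1)) as [E1|N1];
      [|exists 1%nat; split; auto; lia].
    destruct (Req_EM_T (gibbs lam1 t 2) (gibbs lam2 t 2)) as [E2|N2];
      [|exists 2%nat; split; auto; lia].
    pose proof (gibbs_injective lam1 lam2 t Ht1 E1 E2). lra. }
  destruct Hj as (j & Hj & Hne).
  pose proof (gibbs_inequality_strict lam2 t _ _ j Ht1 (gibbs_admissible lam1 t Ht1) Hj
                (gibbs_pos lam1 t j Ht1) Hne) as A.
  pose proof (gibbs_inequality_strict lam1 t _ _ j Ht1 (gibbs_admissible lam2 t Ht1) Hj
                (gibbs_pos lam2 t j Ht1) (not_eq_sym Hne)) as B.
  rewrite entropy_gibbs in A, B by auto.
  (* adding [A] and [B] gives [(lam2 - lam1) * (mean lam1 t - mean lam2 t) > 0] *)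
  nra.
Qed.

Lemma continuity_sum1 (f : R -> nat -> R) t :
  (forall i, continuity (fun x => f x i)) -> continuity (fun x => sum1 (f x) t).
Proof.
  intros H. induction t; simpl; [apply continuity_const; intros x y; auto|].
  apply (continuity_plus (fun x => sum1 (f x) t) (fun x => f x (S t))); auto.
Qed.

Lemma mean_continuity t : (1 <= t)%nat -> continuity (fun lam => mean lam t).
Proof.
  intros Ht. unfold mean, partition.
  apply (continuity_div (fun x => sum1 (fun i => INR i * weight x i) t)
                        (fun x => sum1 (weight x) t)).
  - apply continuity_sum1. intros i. unfold weight. reg.
  - apply continuity_sum1. intros i. unfold weight. reg.
  - intros x. pose proof (partition_pos x t Ht). unfold partition in *. lra.
Qed.

Lemma mean_ivt t a b r : (1 <= t)%nat -> a < b -> mean b t < r < mean a t ->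
  exists lam, a <= lam <= b /\ mean lam t = r.
Proof.
  intros Ht Hab Hr.
  destruct (IVT (fun x => r - mean x t) a b) as (z & Hz & Ez); auto; try lra.
  - apply (continuity_minus (fun _ => r) (fun x => mean x t)).
    + apply continuity_const. intros x y; auto.
    + apply mean_continuity; auto.
  - exists z. split; auto. lra.
Qed.

Lemma mean_open t lam0 eps : (2 <= t)%nat -> 0 < eps -> exists delta, 0 < delta /\
  forall r, Rabs (r - mean lam0 t) < delta ->
  exists lam, Rabs (lam - lam0) <= eps /\ mean lam t = r.
Proof.
  intros Ht He.
  pose proof (mean_decreasing (lam0 - eps) lam0 t Ht ltac:(lra)).
  pose proof (mean_decreasing lam0 (lam0 + eps) t Ht ltac:(lra)).
  set (d1 := mean lam0 t - mean (lam0 + eps) t). set (d2 := mean (lam0 - eps) t - mean lam0 t).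
  exists (Rmin d1 d2). split; [apply Rmin_pos; unfold d1, d2; lra|].
  intros r Hr. pose proof (Rmin_l d1 d2). pose proof (Rmin_r d1 d2).
  apply Rabs_def2 in Hr.
  destruct (mean_ivt t (lam0 - eps) (lam0 + eps) r ltac:(lia) ltac:(lra)) as (lam & Hl & El).
  { unfold d1, d2 in *. lra. }
  exists lam. split; auto. apply Rabs_le; lra.
Qed.

(* With [k = 1] in [Lobj], this is the supremum of [entropy] over the admissible laws of
   mean [r]. *)
Definition max_entropy (t : nat) (r : R) : R := Ltilde0 r 1 t - (r * ln r - r + 1).

Lemma max_entropy_mean lam t : (1 <= t)%nat ->
  max_entropy t (mean lam t) = lam * mean lam t + ln (partition lam t).
Proof. intros Ht. unfold max_entropy. rewrite Ltilde0_mean, Rmult_1_r, ln_1 by auto. ring. Qed.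

Lemma Lhat0_max_entropy n k t lam : (1 <= t)%nat -> 0 < k -> mean lam t = n / k ->
  Lhat0 n k t = n / k * ln n - ln k - n / k + 1 + max_entropy t (n / k).
Proof.
  intros Ht Hk E. unfold Lhat0. rewrite <- E, Ltilde0_mean, max_entropy_mean by auto.
  rewrite E. replace (n / k * k) with n by (field; lra). reflexivity.
Qed.

(* Envelope argument: the two Gibbs inequalities at [lam0] and at a nearby [lam] squeeze the
   difference quotient of [max_entropy] between [lam0] and [lam]. *)
Lemma max_entropy_derive lam0 t : (2 <= t)%nat -> is_derive (max_entropy t) (mean lam0 t) lam0.
Proof.
  intros Ht. assert (Ht1 : (1 <= t)%nat) by lia. apply is_derive_Reals. intros eps He.
  destruct (mean_open t lam0 (eps / 2) Ht ltac:(lra)) as (delta & Hd & Hs).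
  exists (mkposreal delta Hd). intros h Hh Hhd. simpl in Hhd.
  destruct (Hs (mean lam0 t + h)) as (lam & Hl & El).
  { replace (mean lam0 t + h - mean lam0 t) with h by ring; auto. }
  rewrite <- El, !max_entropy_mean by auto.
  pose proof (gibbs_inequality lam0 t _ _ Ht1 (gibbs_admissible lam t Ht1)) as A.
  pose proof (gibbs_inequality lam t _ _ Ht1 (gibbs_admissible lam0 t Ht1)) as B.
  rewrite entropy_gibbs in A, B by auto. rewrite El in A |- *.
  apply Rabs_le_between in Hl.
  set (e := lam * (mean lam0 t + h) + ln (partition lam t)
            - (lam0 * mean lam0 t + ln (partition lam0 t))).
  assert (Rabs (e - lam0 * h) <= eps / 2 * Rabs h).
  { unfold e. destruct (Rle_dec 0 h).
    - rewrite (Rabs_right h) by lra. apply Rabs_le. nra.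
    - rewrite (Rabs_left h) by lra. apply Rabs_le. nra. }
  replace (e / h - lam0) with ((e - lam0 * h) / h) by (field; auto).
  unfold Rdiv. rewrite Rabs_mult, Rabs_inv. pose proof (Rabs_pos_lt h Hh).
  apply Rle_lt_trans with (eps / 2); [|lra].
  apply Rmult_le_reg_r with (Rabs h); auto.
  rewrite Rmult_assoc, Rinv_l by lra. lra.
Qed.

Lemma locally_in_mean_range (g : R -> R) x dg lam0 t : (2 <= t)%nat ->
  is_derive g x dg -> g x = mean lam0 t -> locally x (fun y => exists lam, mean lam t = g y).
Proof.
  intros Ht Hg E. destruct (mean_open t lam0 1 Ht ltac:(lra)) as (delta & Hd & Hs).
  assert (Hc : continuous g x)
    by (apply (ex_derive_continuous (K := R_AbsRing) (V := R_NormedModule)); eexists; exact Hg).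
  pose proof (proj1 (filterlim_locally g (g x)) Hc (mkposreal delta Hd)) as H.
  eapply filter_imp; [|exact H]. intros y Hy. rewrite E in Hy.
  destruct (Hs (g y) Hy) as (lam & _ & El). eauto.
Qed.

Lemma locally_pos k : 0 < k -> locally k (fun y => 0 < y).
Proof.
  intros Hk. exists (mkposreal (k / 2) ltac:(lra)). intros y Hy.
  unfold ball in Hy; simpl in Hy; unfold AbsRing_ball, abs, minus, plus, opp in Hy; simpl in Hy.
  apply Rabs_def2 in Hy. lra.
Qed.

Lemma Lhat0_derive_k n k t lam : (2 <= t)%nat -> 0 < k -> mean lam t = n / k ->
  is_derive (fun k' => Lhat0 n k' t) k (n / k ^ 2 * (1 - lam - ln n) - 1 / k).
Proof.
  intros Ht Hk E.
  assert (Hg : is_derive (fun k' => n / k') k (- (n / k ^ 2))) by (auto_derive; [lra | field; lra]).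
  assert (Helem : is_derive (fun k' => n / k' * ln n - ln k' - n / k' + 1) k
                   (- (n / k ^ 2) * ln n - 1 / k + n / k ^ 2)) by (auto_derive; [lra | field; lra]).
  pose proof (is_derive_comp (max_entropy t) (fun k' => n / k') k lam _
                ltac:(cbv beta; rewrite <- E; apply max_entropy_derive; auto) Hg) as Hent.
  pose proof (is_derive_plus _ _ _ _ _ Helem Hent) as Hsum.
  replace (n / k ^ 2 * (1 - lam - ln n) - 1 / k)
    with (plus (- (n / k ^ 2) * ln n - 1 / k + n / k ^ 2) (scal (- (n / k ^ 2)) lam))
    by (unfold plus, scal; simpl; unfold mult; simpl; ring).
  eapply is_derive_ext_loc; [|exact Hsum]. simpl.
  pose proof (locally_in_mean_range _ k _ lam t Ht Hg (eq_sym E)) as Hloc.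
  eapply filter_imp; [|exact (filter_and _ _ Hloc (locally_pos k Hk))].
  intros y ((lam' & El) & Hy). erewrite Lhat0_max_entropy by (eauto; lia). reflexivity.
Qed.

Lemma Lhat0_derive_n n k t lam : (2 <= t)%nat -> 0 < k -> 0 < n -> mean lam t = n / k ->
  is_derive (fun n' => Lhat0 n' k t) n ((ln n + lam) / k).
Proof.
  intros Ht Hk Hn E.
  assert (Hg : is_derive (fun n' => n' / k) n (/ k)) by (auto_derive; [auto | ring]).
  assert (Helem : is_derive (fun n' => n' / k * ln n' - ln k - n' / k + 1) n (ln n / k))
    by (auto_derive; [lra | field; lra]).
  pose proof (is_derive_comp (max_entropy t) (fun n' => n' / k) n lam _
                ltac:(cbv beta; rewrite <- E; apply max_entropy_derive; auto) Hg) as Hent.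
  pose proof (is_derive_plus _ _ _ _ _ Helem Hent) as Hsum.
  replace ((ln n + lam) / k) with (plus (ln n / k) (scal (/ k) lam))
    by (unfold plus, scal; simpl; unfold mult; simpl; field; lra).
  eapply is_derive_ext_loc; [|exact Hsum]. simpl.
  pose proof (locally_in_mean_range _ n _ lam t Ht Hg (eq_sym E)) as Hloc.
  eapply filter_imp; [|exact Hloc].
  intros y (lam' & El). erewrite Lhat0_max_entropy by (eauto; lia). reflexivity.
Qed.

Lemma L0_derive_k n k t lam : (2 <= t)%nat -> 0 < k -> mean lam t = n / k ->
  is_derive (fun k' => L0 n k' t) k (ln (partition lam t) - ln k).
Proof.
  intros Ht Hk E. unfold L0.
  pose proof (is_derive_mult (fun k' => k') _ k 1 _ (is_derive_id k)
                (Lhat0_derive_k n k t lam Ht Hk E) Rmult_comm) as H.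
  assert (Hval : Lhat0 n k t
                 = n / k * ln n - ln k - n / k + 1 + (lam * (n / k) + ln (partition lam t))).
  { erewrite Lhat0_max_entropy, <- E, max_entropy_mean by (eauto; lia). reflexivity. }
  replace (ln (partition lam t) - ln k)
    with (plus (mult 1 (Lhat0 n k t)) (mult k (n / k ^ 2 * (1 - lam - ln n) - 1 / k)))
    by (unfold plus, mult; simpl; rewrite Hval; field; lra).
  exact H.
Qed.

(** * Localization of the tilt *)

(* With [lam = tilt_of_scale s t], [weight_ratio] reads
   [weight i / weight (S i) = 2^i (i+1) / (s 2^(t-1) t)]: below the top index the weights grow
   by a factor at least [s] per step, and near the top by a factor at most [2^M s]. *)
Definition tilt_of_scale (s : R) (t : nat) : R := - ln (s * 2 ^ (t - 1) * INR t).

Lemma tilt_of_scale_eq s t : 0 < s -> (1 <= t)%nat ->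
  tilt_of_scale s t = - ln s - (INR t - 1) * ln 2 - ln (INR t).
Proof.
  intros Hs Ht. unfold tilt_of_scale. pose proof (pow_lt 2 (t - 1) ltac:(lra)).
  assert (0 < INR t) by (apply lt_0_INR; lia).
  rewrite !ln_mult, ln_pow, minus_INR by (try apply Rmult_lt_0_compat; auto; lra).
  simpl INR at 2. ring.
Qed.

Lemma exp_tilt_of_scale s t : 0 < s -> (1 <= t)%nat ->
  exp (tilt_of_scale s t) = / (s * 2 ^ (t - 1) * INR t).
Proof.
  intros Hs Ht. unfold tilt_of_scale. pose proof (pow_lt 2 (t - 1) ltac:(lra)).
  assert (0 < INR t) by (apply lt_0_INR; lia).
  rewrite exp_Ropp, exp_ln; auto. repeat apply Rmult_lt_0_compat; auto.
Qed.

Lemma weight_ratio_up s t i : 0 < s -> (S i <= t)%nat ->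
  weight (tilt_of_scale s t) i <= weight (tilt_of_scale s t) (S i) * / s.
Proof.
  intros Hs Hi. assert (Ht : (1 <= t)%nat) by lia.
  rewrite weight_ratio, exp_tilt_of_scale by auto.
  pose proof (weight_pos (tilt_of_scale s t) (S i)).
  pose proof (pow_lt 2 i ltac:(lra)). pose proof (pos_INR (S i)).
  assert (0 < 2 ^ i * INR (S i)) by (apply Rmult_lt_0_compat; [lra | apply lt_0_INR; lia]).
  assert (Hmono : 2 ^ i * INR (S i) <= 2 ^ (t - 1) * INR t).
  { apply Rmult_le_compat; try lra; [apply Rle_pow; [lra | lia] | apply le_INR; lia]. }
  assert (0 < 2 ^ (t - 1) * INR t) by lra.
  pose proof (pow_lt 2 (t - 1) ltac:(lra)). assert (0 < INR t) by (apply lt_0_INR; lia).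
  rewrite Rmult_assoc. apply Rmult_le_compat_l; [lra|].
  replace (/ (s * 2 ^ (t - 1) * INR t) * (2 ^ i * INR (S i)))
    with (/ s * ((2 ^ i * INR (S i)) / (2 ^ (t - 1) * INR t))) by (field; repeat split; lra).
  rewrite <- (Rmult_1_r (/ s)) at 2. apply Rmult_le_compat_l; [left; apply Rinv_0_lt_compat; auto|].
  apply Rmult_le_reg_r with (2 ^ (t - 1) * INR t); auto.
  unfold Rdiv. rewrite Rmult_assoc, Rinv_l; lra.
Qed.

Lemma weight_ratio_low s t i M : 0 < s -> (2 * M <= t)%nat -> (t - M <= i)%nat -> (S i <= t)%nat ->
  weight (tilt_of_scale s t) (S i) <= weight (tilt_of_scale s t) i * (2 ^ M * s).
Proof.
  intros Hs Ht Hi1 Hi. assert (Ht1 : (1 <= t)%nat) by lia.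
  rewrite (weight_ratio _ i), exp_tilt_of_scale by auto.
  pose proof (pow_lt 2 (t - 1) ltac:(lra)). assert (0 < INR t) by (apply lt_0_INR; lia).
  pose proof (weight_pos (tilt_of_scale s t) (S i)).
  assert (0 < 2 ^ (t - 1) * INR t) by (apply Rmult_lt_0_compat; auto).
  assert (Htop : 2 ^ (t - 1) * INR t <= 2 ^ M * (2 ^ i * INR (S i))).
  { replace (2 ^ (t - 1)) with (2 ^ (t - M) * 2 ^ (M - 1)) by (rewrite <- pow_add; f_equal; lia).
    replace (2 ^ M) with (2 * 2 ^ (M - 1)) by (replace M with (S (M - 1)) at 2 by lia; reflexivity).
    assert (2 ^ (t - M) <= 2 ^ i) by (apply Rle_pow; [lra | lia]).
    assert (INR t <= 2 * INR (S i)) by (rewrite <- (mult_INR 2); apply le_INR; lia).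
    pose proof (pow_lt 2 (M - 1) ltac:(lra)). pose proof (pow_lt 2 (t - M) ltac:(lra)).
    assert (2 ^ (t - M) * INR t <= 2 ^ i * (2 * INR (S i))) by (apply Rmult_le_compat; lra).
    nra. }
  replace (weight (tilt_of_scale s t) (S i) * / (s * 2 ^ (t - 1) * INR t) * (2 ^ i * INR (S i))
             * (2 ^ M * s))
    with (weight (tilt_of_scale s t) (S i)
          * ((2 ^ M * (2 ^ i * INR (S i))) / (2 ^ (t - 1) * INR t)))
    by (field; repeat split; lra).
  rewrite <- (Rmult_1_r (weight _ (S i))) at 1. apply Rmult_le_compat_l; [lra|].
  apply Rmult_le_reg_r with (2 ^ (t - 1) * INR t); auto.
  unfold Rdiv. rewrite Rmult_assoc, Rinv_l; lra.
Qed.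

Lemma weight_below_top s t sig j : 0 < sig <= s -> (j <= t)%nat ->
  weight (tilt_of_scale s t) (t - j) <= weight (tilt_of_scale s t) t * (/ sig) ^ j.
Proof.
  intros Hsig Hj. revert j Hj. apply ratio_pow_backward; [left; apply Rinv_0_lt_compat; lra|].
  intros i Hi. apply Rle_trans with (weight (tilt_of_scale s t) (S i) * / s).
  - apply weight_ratio_up; auto; lra.
  - apply Rmult_le_compat_l; [left; apply weight_pos | apply Rinv_le_contravar; lra].
Qed.

Lemma weight_top_le s t M : 0 < s -> (2 * M <= t)%nat ->
  weight (tilt_of_scale s t) t <= weight (tilt_of_scale s t) (t - M) * (2 ^ M * s) ^ M.
Proof.
  intros Hs Ht. apply ratio_pow_forward with M; auto; try lia.
  - pose proof (pow_lt 2 M ltac:(lra)). nra.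
  - intros i Hi1 Hi2. apply weight_ratio_low; auto; lra.
Qed.

Lemma gap_mean_eq lam t c : (1 <= t)%nat ->
  INR t - mean lam t - c = sum1 (fun l => (INR t - INR l - c) * weight lam l) t / partition lam t.
Proof.
  intros Ht. unfold mean. pose proof (partition_pos lam t Ht).
  rewrite (sum1_ext (fun l => (INR t - INR l - c) * weight lam l)
                    (fun l => (INR t - c) * weight lam l - INR l * weight lam l)) by (intros; ring).
  rewrite sum1_minus, sum1_scal. fold (partition lam t). field. lra.
Qed.

Lemma sum1_gap_geometric (w : nat -> R) (T : R) i : (1 <= i)%nat -> INR i + 1 <= T ->
  (forall j, 0 < w j) -> (forall j, (S j <= i)%nat -> w j <= w (S j) / 4) ->
  sum1 (fun l => (T - INR l) * w l) i <= 2 * (T - INR i) * w i.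
Proof.
  intros Hi HT Hw Hr. induction i as [|i IH]; [lia|]. destruct i as [|i].
  - simpl. pose proof (Hw 1%nat). simpl in HT. nra.
  - rewrite S_INR in HT.
    assert (IHi : sum1 (fun l => (T - INR l) * w l) (S i) <= 2 * (T - INR (S i)) * w (S i))
      by (apply IH; [lia | lra | intros; apply Hr; lia]).
    pose proof (Hr (S i) (le_n _)). pose proof (Hw (S i)). pose proof (Hw (S (S i))).
    change (sum1 (fun l => (T - INR l) * w l) (S (S i)))
      with (sum1 (fun l => (T - INR l) * w l) (S i) + (T - INR (S (S i))) * w (S (S i))).
    rewrite !S_INR in *.
    assert (2 * (T - (INR i + 1)) * w (S i) <= 2 * (T - (INR i + 1)) * (w (S (S i)) / 4))
      by (apply Rmult_le_compat_l; lra).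
    nra.
Qed.

Lemma gap_mean_le s t : 4 <= s -> (2 <= t)%nat -> INR t - mean (tilt_of_scale s t) t <= 2 / s.
Proof.
  intros Hs Ht. set (lam := tilt_of_scale s t). set (w := weight lam).
  assert (Hr : forall i, (S i <= t)%nat -> w i <= w (S i) * / s)
    by (intros; apply weight_ratio_up; auto; lra).
  assert (Hsum : sum1 (fun l => (INR t - INR l) * w l) t <= 2 / s * w t).
  { destruct t as [|t']; [lia|]. cbn [sum1]. rewrite Rminus_diag, Rmult_0_l, Rplus_0_r.
    assert (H4 : forall j, (S j <= t')%nat -> w j <= w (S j) / 4).
    { intros j Hj. apply Rle_trans with (w (S j) * / s); [apply Hr; lia|].
      unfold w, Rdiv. pose proof (weight_pos lam (S j)).
      apply Rmult_le_compat_l; [lra | apply Rinv_le_contravar; lra]. }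
    pose proof (sum1_gap_geometric w (INR (S t')) t' ltac:(lia) ltac:(rewrite S_INR; lra)
                  (weight_pos lam) H4) as Hg.
    replace (INR (S t') - INR t') with 1 in Hg by (rewrite S_INR; ring).
    pose proof (Hr t' (le_n _)). pose proof (weight_pos lam t'). unfold w in *. unfold Rdiv. nra. }
  replace (INR t - mean lam t) with (INR t - mean lam t - 0) by ring.
  rewrite gap_mean_eq by lia.
  rewrite (sum1_ext _ (fun l => (INR t - INR l) * w l)) by (intros; unfold w; ring).
  pose proof (partition_pos lam t ltac:(lia)). pose proof (weight_pos lam t).
  pose proof (weight_le_partition lam t ltac:(lia)).
  assert (0 < 2 / s) by (apply Rdiv_lt_0_compat; lra).
  apply Rmult_le_reg_r with (partition lam t); auto.
  unfold Rdiv at 1. rewrite Rmult_assoc, Rinv_l, Rmult_1_r by lra. unfold w in *. nra.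
Qed.

Lemma pow_scale_mul_inv_pow M s : (1 <= M)%nat -> s <> 0 ->
  (2 ^ M * s) ^ M * (/ s) ^ (M - 1) = (2 ^ M) ^ M * s.
Proof.
  intros HM Hs. rewrite Rpow_mult_distr, pow_inv.
  replace (s ^ M) with (s * s ^ (M - 1)) by (replace M with (S (M - 1)) at 2 by lia; reflexivity).
  field. apply pow_nonzero; auto.
Qed.

Lemma weight_top_window s t M j : 0 < s <= 1 -> (1 <= j <= M)%nat -> (M <= t)%nat ->
  weight (tilt_of_scale s t) (t - M + j) <= weight (tilt_of_scale s t) t * (/ s) ^ (M - 1).
Proof.
  intros Hs Hj HM.
  pose proof (weight_below_top s t s (M - j) ltac:(lra) ltac:(lia)) as Hu.
  replace (t - (M - j))%nat with (t - M + j)%nat in Hu by lia.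
  apply Rle_trans with (1 := Hu). apply Rmult_le_compat_l; [left; apply weight_pos|].
  apply Rle_pow; [rewrite <- Rinv_1; apply Rinv_le_contravar; lra | lia].
Qed.

Lemma gap_mean_gt s t M c : 0 < c < INR M -> (1 <= M)%nat -> (2 * M <= t)%nat -> 0 < s <= 1 ->
  INR M * c * ((2 ^ M) ^ M * s) < INR M - c -> c < INR t - mean (tilt_of_scale s t) t.
Proof.
  intros Hc HM1 Ht Hs Hcond. set (lam := tilt_of_scale s t).
  set (f := fun l => (INR t - INR l - c) * weight lam l).
  assert (Ht1 : (1 <= t)%nat) by lia.
  pose proof (weight_top_le s t M ltac:(lra) Ht) as Hlow. fold lam in Hlow.
  pose proof (pow_scale_mul_inv_pow M s HM1 ltac:(lra)) as HAB.
  set (A := (2 ^ M * s) ^ M) in Hlow, HAB. set (B := (/ s) ^ (M - 1)%nat) in HAB.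
  assert (HA : 0 < A) by (unfold A; apply pow_lt; pose proof (pow_lt 2 M ltac:(lra)); nra).
  assert (HB : 1 <= B)
    by (unfold B; apply pow_R1_Rle; rewrite <- Rinv_1; apply Rinv_le_contravar; lra).
  pose proof (weight_pos lam t) as Hwt.
  (* the [l = t - M] term of [sum1 f t] is positive and outweighs the at most [M] negative
     terms above it *)
  assert (Head : (INR M - c) * weight lam (t - M)%nat <= sum1 f (t - M)).
  { replace ((INR M - c) * weight lam (t - M)%nat) with (f (t - M)%nat)
      by (unfold f; rewrite minus_INR by lia; ring).
    apply sum1_ge_term; [lia|]. intros i Hi. unfold f. pose proof (weight_pos lam i).
    assert (INR i + INR M <= INR t) by (rewrite <- plus_INR; apply le_INR; lia). nra. }
  assert (Tail : INR M * (- c * (weight lam t * B)) <= sum1 (fun j => f (t - M + j)%nat) M).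
  { rewrite <- sum1_const. apply sum1_le. intros j Hj. unfold f.
    pose proof (weight_top_window s t M j ltac:(lra) Hj ltac:(lia)) as Hu. fold lam B in Hu.
    pose proof (weight_pos lam (t - M + j)%nat).
    assert (INR (t - M + j) <= INR t) by (apply le_INR; lia).
    nra. }
  assert (Hsum : 0 < sum1 f t).
  { replace (sum1 f t) with (sum1 f (t - M + M)) by (f_equal; lia). rewrite sum1_split.
    assert (INR M * c * (A * B) < INR M - c) by (rewrite HAB; auto).
    assert ((INR M - c) * weight lam t <= (INR M - c) * (weight lam (t - M)%nat * A))
      by (apply Rmult_le_compat_l; lra).
    assert (INR M * c * (A * B) * weight lam t < (INR M - c) * weight lam t)
      by (apply Rmult_lt_compat_r; auto).
    assert (INR M * c * B * weight lam t < (INR M - c) * weight lam (t - M)%nat)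
      by (apply Rmult_lt_reg_r with A; auto; nra).
    nra. }
  pose proof (gap_mean_eq lam t c Ht1). pose proof (partition_pos lam t Ht1).
  assert (0 < sum1 f t / partition lam t) by (apply Rdiv_lt_0_compat; auto).
  unfold f in *. lra.
Qed.

Lemma partition_le s t sig : 0 < sig <= 1 -> sig <= s -> (1 <= t)%nat ->
  partition (tilt_of_scale s t) t <= INR t * ((/ sig) ^ t * weight (tilt_of_scale s t) t).
Proof.
  intros Hsig Hs Ht. set (lam := tilt_of_scale s t). apply sum1_ub. intros i Hi.
  pose proof (weight_below_top s t sig (t - i) ltac:(lra) ltac:(lia)) as Hu. fold lam in Hu.
  replace (t - (t - i))%nat with i in Hu by lia.
  assert ((/ sig) ^ (t - i) <= (/ sig) ^ t)
    by (apply Rle_pow; [rewrite <- Rinv_1; apply Rinv_le_contravar; lra | lia]).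
  pose proof (weight_pos lam t). nra.
Qed.

Lemma ln_partition_le lam t sig : 0 < sig <= 1 -> (1 <= t)%nat -> lam <= tilt_of_scale sig t ->
  ln (partition lam t) - ln (weight lam t) <= ln (INR t) - INR t * ln sig.
Proof.
  intros Hsig Ht Hlam. rewrite tilt_of_scale_eq in Hlam by (auto; lra).
  set (s := exp (- (lam + (INR t - 1) * ln 2 + ln (INR t)))).
  assert (Es : tilt_of_scale s t = lam).
  { unfold s. rewrite tilt_of_scale_eq, ln_exp by (auto using exp_pos). ring. }
  assert (Hs : sig <= s).
  { destruct (Rlt_or_le s sig) as [Hlt|]; auto.
    apply ln_increasing in Hlt; [|apply exp_pos]. unfold s in Hlt. rewrite ln_exp in Hlt. lra. }
  pose proof (partition_le s t sig Hsig Hs Ht) as HZ. rewrite Es in HZ.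
  pose proof (weight_pos lam t). assert (0 < INR t) by (apply lt_0_INR; lia).
  assert (0 < / sig) by (apply Rinv_0_lt_compat; lra).
  assert (0 < (/ sig) ^ t) by (apply pow_lt; auto).
  assert (0 < (/ sig) ^ t * weight lam t) by (apply Rmult_lt_0_compat; auto).
  apply ln_le in HZ; [|apply partition_pos; auto].
  rewrite !ln_mult, ln_pow, ln_Rinv in HZ by (auto; lra). lra.
Qed.

Lemma exists_small_scale M c : 0 < c < INR M ->
  exists sig, 0 < sig <= 1 / 2 /\ INR M * c * ((2 ^ M) ^ M * sig) < INR M - c.
Proof.
  intros Hc. set (P := INR M * c * (2 ^ M) ^ M).
  assert (HP : 0 < P) by (apply Rmult_lt_0_compat; [nra | apply pow_lt, pow_lt; lra]).
  set (sig := Rmin (1 / 2) ((INR M - c) / (2 * P))).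
  exists sig. split; [split; [apply Rmin_pos; [lra | apply Rdiv_lt_0_compat; lra] | apply Rmin_l]|].
  replace (INR M * c * ((2 ^ M) ^ M * sig)) with (P * sig) by (unfold P; ring).
  apply Rle_lt_trans with (P * ((INR M - c) / (2 * P))).
  - apply Rmult_le_compat_l; [lra | apply Rmin_r].
  - replace (P * ((INR M - c) / (2 * P))) with ((INR M - c) / 2) by (field; lra). lra.
Qed.

Lemma tilt_localization c1 c2 : 0 < c1 -> c1 <= c2 ->
  exists (B X : R) (T0 : nat), 0 <= B /\ 0 <= X /\
  forall (t : nat) (rho : R), (T0 <= t)%nat -> c1 <= INR t - rho <= c2 ->
  exists lam, mean lam t = rho /\
    Rabs (lam + (INR t - 1) * ln 2 + ln (INR t)) <= B /\
    ln (partition lam t) - ln (weight lam t) <= ln (INR t) + INR t * X.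
Proof.
  intros Hc1 Hc12. destruct (INR_unbounded c2) as (M & HM).
  assert (HM1 : (1 <= M)%nat) by (destruct M; simpl in HM; lra || lia).
  destruct (exists_small_scale M c2 ltac:(lra)) as (sig1 & Hs1 & Hcond).
  set (sig2 := Rmax 4 (4 / c1)).
  assert (Hs2 : 4 <= sig2 /\ 4 / c1 <= sig2) by (split; [apply Rmax_l | apply Rmax_r]).
  exists (Rabs (ln sig1) + Rabs (ln sig2)), (- ln sig1), (2 * M)%nat.
  split; [pose proof (Rabs_pos (ln sig1)); pose proof (Rabs_pos (ln sig2)); lra|].
  split; [assert (ln sig1 < ln 1) by (apply ln_increasing; lra); rewrite ln_1 in *; lra|].
  intros t rho Ht Hrho. assert (Ht1 : (1 <= t)%nat) by lia.
  assert (G2 : INR t - mean (tilt_of_scale sig2 t) t < c1).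
  { pose proof (gap_mean_le sig2 t ltac:(lra) ltac:(lia)).
    assert (4 <= c1 * sig2).
    { replace 4 with (4 / c1 * c1) at 1 by (field; lra). rewrite (Rmult_comm c1).
      apply Rmult_le_compat_r; lra. }
    assert (2 / sig2 <= c1 / 2).
    { apply Rmult_le_reg_r with sig2; [lra|]. unfold Rdiv. rewrite Rmult_assoc, Rinv_l; lra. }
    lra. }
  assert (G1 : c2 < INR t - mean (tilt_of_scale sig1 t) t)
    by (apply gap_mean_gt with M; auto; lra).
  assert (Hlam : tilt_of_scale sig2 t < tilt_of_scale sig1 t).
  { rewrite !tilt_of_scale_eq by (auto; lra).
    assert (ln sig1 < ln sig2) by (apply ln_increasing; lra). lra. }
  destruct (mean_ivt t _ _ rho Ht1 Hlam ltac:(lra)) as (lam & Hl & Em).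
  exists lam. split; [auto|]. split.
  - rewrite !tilt_of_scale_eq in Hl by (auto; lra).
    pose proof (Rle_abs (ln sig1)). pose proof (Rle_abs (- ln sig2)). rewrite Rabs_Ropp in *.
    pose proof (Rle_abs (- ln sig1)). pose proof (Rle_abs (ln sig2)). rewrite Rabs_Ropp in *.
    apply Rabs_le. lra.
  - pose proof (ln_partition_le lam t sig1 ltac:(lra) Ht1 (proj2 Hl)). lra.
Qed.

(** * Asymptotics *)

Lemma alpha0_ln n :
  alpha0 n = 2 * ln n / ln 2 - 2 * ln (ln n / ln 2) / ln 2 + 2 * (1 - ln 2) / ln 2 + 1.
Proof.
  pose proof ln2_bounds. unfold alpha0, log2.
  rewrite (ln_div (exp 1) 2), ln_exp by (try apply exp_pos; lra). field. lra.
Qed.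

Lemma ln_weight_top_eq lam t : ln (weight lam t) =
  INR t * (INR t - 1) / 2 * ln 2 + INR t * ln (INR t)
  - INR t * (lam + (INR t - 1) * ln 2 + ln (INR t)) - ln (INR (Factorial.fact t)).
Proof. unfold weight. rewrite ln_div, ln_exp, ln_d by (apply exp_pos || apply d_pos). field. Qed.

Section Asymptotics.

Context {C c1 c2 B X k lam n : R} {t T0 : nat}.
Hypothesis hC : 0 <= C.
Hypothesis hc : 0 <= c1 <= c2.
Hypothesis hB : 0 <= B.
Hypothesis hn : exp (100 + 10 * (C + B + c2 + INR T0)) <= n.
Hypothesis ht : Rabs (INR t - alpha0 n) <= C.

Local Notation L := (ln n).
Local Notation lnL := (ln (ln n)).

Lemma ln_large : 100 + 10 * (C + B + c2 + INR T0) <= L.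
Proof.
  rewrite <- (ln_exp (100 + 10 * (C + B + c2 + INR T0))).
  apply ln_le; auto using exp_pos.
Qed.

Lemma n_pos : 0 < n.
Proof. pose proof (exp_pos (100 + 10 * (C + B + c2 + INR T0))). lra. Qed.

Lemma lnln_bounds : 1 <= lnL <= L / 16 + 3.
Proof.
  pose proof ln_large. pose proof (pos_INR T0). split.
  - rewrite <- (ln_exp 1). apply ln_le; [apply exp_pos|]. pose proof exp_le_3. lra.
  - pose proof (ln_le_affine L 16 ltac:(lra) ltac:(lra)). pose proof ln_16_lt_4. lra.
Qed.

Lemma t_ln2_near : Rabs (INR t * ln 2 - 2 * L) <= 2 * lnL + C + 4.
Proof.
  pose proof ln2_bounds. pose proof ln_ln2_bounds. pose proof lnln_bounds.
  pose proof ln_large. pose proof (pos_INR T0).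
  rewrite alpha0_ln, ln_div in ht by lra.
  set (T := INR t) in *.
  set (a := 2 * L / ln 2 - 2 * (lnL - ln (ln 2)) / ln 2 + 2 * (1 - ln 2) / ln 2 + 1) in *.
  assert (E : T * ln 2 - 2 * L = (T - a) * ln 2 - 2 * (lnL - ln (ln 2)) + 2 * (1 - ln 2) + ln 2)
    by (unfold a; field; lra).
  assert (Hta : Rabs ((T - a) * ln 2) <= C).
  { rewrite Rabs_mult, (Rabs_right (ln 2)) by lra.
    apply Rle_trans with (C * 1); [apply Rmult_le_compat; auto using Rabs_pos; lra | lra]. }
  rewrite E. apply Rabs_le. apply Rabs_le_between in Hta. lra.
Qed.

Lemma t_bounds : L + c2 + 2 * INR T0 + 2 <= INR t <= 5 * L - 1.
Proof.
  pose proof ln2_bounds. pose proof ln_large. pose proof lnln_bounds.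
  pose proof (pos_INR t). pose proof (pos_INR T0).
  pose proof t_ln2_near as Hy. apply Rabs_le_between in Hy.
  assert (INR t * ln 2 <= INR t)
    by (rewrite <- (Rmult_1_r (INR t)) at 2; apply Rmult_le_compat_l; lra).
  assert (INR t / 2 <= INR t * ln 2) by (apply Rmult_le_compat_l; lra).
  lra.
Qed.

Lemma T0_le_t : (T0 <= t)%nat.
Proof. apply INR_le. pose proof t_bounds. pose proof ln_large. pose proof (pos_INR T0). lra. Qed.

Lemma two_le_t : (2 <= t)%nat.
Proof.
  apply (INR_le 2). pose proof t_bounds. pose proof ln_large. pose proof (pos_INR T0). simpl. lra.
Qed.

Lemma ln_t_bounds : 0 <= ln (INR t) <= 4 + lnL.
Proof.
  apply ln_le_5_mul. pose proof t_bounds. pose proof ln_large. pose proof (pos_INR T0). lra.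
Qed.

Hypothesis hk : 0 < k <= n / 2.
Hypothesis hrho : c1 <= INR t - n / k <= c2.

Lemma rho_bounds : 2 <= n / k /\ L <= n / k <= 5 * L.
Proof.
  pose proof t_bounds. pose proof (pos_INR T0). split; [|lra].
  apply Rmult_le_reg_r with k; [lra|]. unfold Rdiv. rewrite Rmult_assoc, Rinv_l; lra.
Qed.

Lemma ln_rho_bounds : 0 <= ln (n / k) <= 4 + lnL.
Proof. apply ln_le_5_mul. pose proof rho_bounds. lra. Qed.

Hypothesis hlam : Rabs (lam + (INR t - 1) * ln 2 + ln (INR t)) <= B.

Lemma tilt_bounds : L / 2 <= 1 - lam - L <= 2 * L.
Proof.
  pose proof ln2_bounds. pose proof ln_large. pose proof lnln_bounds. pose proof ln_t_bounds.
  pose proof (pos_INR T0). pose proof t_ln2_near as Hy. apply Rabs_le_between in Hy.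
  apply Rabs_le_between in hlam. lra.
Qed.

Hypothesis hm : mean lam t = n / k.

Lemma Lhat0_derive_k_bounds : exists dk : R,
  is_derive (fun k' => Lhat0 n k' t) k dk /\ 1 / 4 * L ^ 3 / n <= dk <= 50 * L ^ 3 / n.
Proof.
  exists (n / k ^ 2 * (1 - lam - L) - 1 / k).
  split; [apply Lhat0_derive_k; auto using two_le_t; lra|].
  pose proof n_pos. pose proof ln_large. pose proof (pos_INR T0).
  destruct rho_bounds as [_ Hr]. pose proof tilt_bounds as HY.
  replace (n / k ^ 2 * (1 - lam - L) - 1 / k)
    with (n / k * (n / k * (1 - lam - L) - 1) / n) by (field; lra).
  set (rho := n / k) in *. set (Y := 1 - lam - L) in *.
  assert (L * (L / 2) <= rho * Y) by (apply Rmult_le_compat; lra).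
  assert (rho * Y <= 5 * L * (2 * L)) by (apply Rmult_le_compat; lra).
  assert (L * (L * L / 4) <= rho * (rho * Y - 1)) by (apply Rmult_le_compat; nra).
  assert (rho * (rho * Y - 1) <= 5 * L * (10 * L * L)) by (apply Rmult_le_compat; nra).
  unfold Rdiv. split; apply Rmult_le_compat_r; try (left; apply Rinv_0_lt_compat; lra); simpl; lra.
Qed.

Lemma Lhat0_derive_n_bounds : exists dn : R,
  is_derive (fun n' => Lhat0 n' k t) n dn /\
  - (10 * L ^ 2 / n) <= dn <= - (1 / 4 * L ^ 2 / n).
Proof.
  exists ((L + lam) / k). split; [apply Lhat0_derive_n; auto using two_le_t, n_pos; lra|].
  pose proof n_pos. pose proof ln_large. pose proof (pos_INR T0).
  destruct rho_bounds as [_ Hr]. pose proof tilt_bounds as HY.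
  replace ((L + lam) / k) with (- (n / k * (1 - lam - L - 1)) / n) by (field; lra).
  set (rho := n / k) in *. set (Y := 1 - lam - L) in *.
  assert (L * (L / 4) <= rho * (Y - 1)) by (apply Rmult_le_compat; lra).
  assert (rho * (Y - 1) <= 5 * L * (2 * L)) by (apply Rmult_le_compat; lra).
  assert (0 < / n) by (apply Rinv_0_lt_compat; lra).
  unfold Rdiv. rewrite <- !Ropp_mult_distr_l.
  split; apply Ropp_le_contravar, Rmult_le_compat_r; simpl; lra.
Qed.

Lemma quadratic_term_near :
  Rabs (INR t * (INR t - 1) / 2 * ln 2 - 2 / ln 2 * L ^ 2)
  <= ((6 + C) * (10 + C) + 8 + C) * (L * lnL).
Proof.
  pose proof ln2_bounds. pose proof ln_large. pose proof lnln_bounds. pose proof (pos_INR T0).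
  pose proof t_ln2_near as Hg. set (y := INR t * ln 2) in *.
  assert (HC1 : C <= C * lnL) by (rewrite <- (Rmult_1_r C) at 1; apply Rmult_le_compat_l; lra).
  assert (HC2 : C <= C * L) by (rewrite <- (Rmult_1_r C) at 1; apply Rmult_le_compat_l; lra).
  assert (HLl : L <= L * lnL) by (rewrite <- (Rmult_1_r L) at 1; apply Rmult_le_compat_l; lra).
  assert (Hll : lnL <= L * lnL) by (rewrite <- (Rmult_1_l lnL) at 1; apply Rmult_le_compat_r; lra).
  assert (Hg' : Rabs (y - 2 * L) <= (6 + C) * lnL) by lra.
  assert (Hs : Rabs (y + 2 * L) <= (10 + C) * L)
    by (apply Rabs_le_between in Hg; apply Rabs_le; lra).
  (* the main term is [(y - 2L)(y + 2L) / (2 ln 2)], which is O(L lnL) since y = 2L + O(lnL) *)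
  replace (INR t * (INR t - 1) / 2 * ln 2 - 2 / ln 2 * L ^ 2)
    with ((y - 2 * L) * (y + 2 * L) / (2 * ln 2) - y / 2) by (unfold y; field; lra).
  assert (Hprod : Rabs ((y - 2 * L) * (y + 2 * L) / (2 * ln 2)) <= (6 + C) * (10 + C) * (L * lnL)).
  { unfold Rdiv. rewrite !Rabs_mult, (Rabs_right (/ (2 * ln 2)))
      by (apply Rle_ge; left; apply Rinv_0_lt_compat; lra).
    assert (/ (2 * ln 2) <= 1) by (rewrite <- Rinv_1; apply Rinv_le_contravar; lra).
    assert (0 < / (2 * ln 2)) by (apply Rinv_0_lt_compat; lra).
    pose proof (Rabs_pos (y - 2 * L)). pose proof (Rabs_pos (y + 2 * L)).
    assert (Rabs (y - 2 * L) * Rabs (y + 2 * L) <= (6 + C) * lnL * ((10 + C) * L))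
      by (apply Rmult_le_compat; auto).
    assert (Rabs (y - 2 * L) * Rabs (y + 2 * L) * / (2 * ln 2)
            <= Rabs (y - 2 * L) * Rabs (y + 2 * L) * 1)
      by (apply Rmult_le_compat_l; auto; apply Rmult_le_pos; auto).
    nra. }
  assert (Hhalf : Rabs (y / 2) <= (8 + C) * (L * lnL)).
  { apply Rabs_le_between in Hg. apply Rabs_le.
    assert ((8 + C) * L <= (8 + C) * (L * lnL)) by (apply Rmult_le_compat_l; lra). lra. }
  apply Rabs_le_between in Hprod. apply Rabs_le_between in Hhalf. apply Rabs_le. lra.
Qed.

Hypothesis hX : 0 <= X.
Hypothesis hZ : ln (partition lam t) - ln (weight lam t) <= ln (INR t) + INR t * X.

Lemma ln_partition_sub_ln_k_near :
  Rabs (ln (partition lam t) - ln k - 2 / ln 2 * L ^ 2)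
  <= ((6 + C) * (10 + C) + C + 78 + 5 * B + 5 * X) * L * lnL.
Proof.
  pose proof ln2_bounds. pose proof ln_large. pose proof lnln_bounds. pose proof (pos_INR T0).
  pose proof t_bounds. pose proof ln_t_bounds. pose proof ln_rho_bounds. pose proof n_pos.
  pose proof quadratic_term_near as Hq. apply Rabs_le_between in Hq.
  set (u := ln (INR t)) in *. set (ell := lam + (INR t - 1) * ln 2 + u) in *.
  set (r := ln (partition lam t) - ln (weight lam t)) in *.
  set (F := ln (INR (Factorial.fact t))).
  assert (HF : 0 <= F <= INR t * u).
  { pose proof (INR_fact_ge1 t). pose proof (INR_fact_le_pow t). unfold F, u. split.
    - rewrite <- ln_1. apply ln_le; lra.
    - rewrite <- ln_pow by lra. apply ln_le; lra. }
  assert (Hr : 0 <= r).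
  { pose proof (weight_le_partition lam t ltac:(pose proof two_le_t; lia)) as Hw.
    apply ln_le in Hw; [unfold r; lra | apply weight_pos]. }
  assert (HLl : L <= L * lnL) by (rewrite <- (Rmult_1_r L) at 1; apply Rmult_le_compat_l; lra).
  assert (Htu : INR t * u <= 25 * (L * lnL))
    by (assert (INR t * u <= 5 * L * (4 + lnL)) by (apply Rmult_le_compat; lra); lra).
  assert (Hell : Rabs (INR t * ell) <= 5 * B * (L * lnL)).
  { rewrite Rabs_mult, (Rabs_right (INR t)) by lra.
    assert (INR t * Rabs ell <= 5 * L * B) by (apply Rmult_le_compat; auto using Rabs_pos; lra).
    assert (B * L <= B * (L * lnL)) by (apply Rmult_le_compat_l; lra). lra. }
  apply Rabs_le_between in Hell.
  assert (Hrb : r <= (5 + 5 * X) * (L * lnL)).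
  { assert (INR t * X <= 5 * L * X) by (apply Rmult_le_compat_r; lra).
    assert (X * L <= X * (L * lnL)) by (apply Rmult_le_compat_l; lra). lra. }
  assert (E : ln (partition lam t) - ln k - 2 / ln 2 * L ^ 2 =
              (INR t * (INR t - 1) / 2 * ln 2 - 2 / ln 2 * L ^ 2)
              + INR t * u - INR t * ell - F + r - L + ln (n / k)).
  { rewrite ln_div by lra. unfold r. rewrite ln_weight_top_eq. fold u ell F. field. lra. }
  rewrite E. apply Rabs_le. nra.
Qed.

Lemma L0_derive_k_bounds : exists dK : R,
  is_derive (fun k' => L0 n k' t) k dK /\
  Rabs (dK - 2 / ln 2 * L ^ 2) <= ((6 + C) * (10 + C) + C + 78 + 5 * B + 5 * X) * L * lnL.
Proof.
  exists (ln (partition lam t) - ln k). split.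
  - apply L0_derive_k; auto using two_le_t; lra.
  - apply ln_partition_sub_ln_k_near.
Qed.

End Asymptotics.

Theorem corollary40 (t : nat -> nat) (C c1 c2 : R) (Nt : nat) :
  (forall n : nat, (Nt <= n)%nat -> Rabs (INR (t n) - alpha0 (INR n)) <= C) ->
  0 < c1 -> c1 <= c2 ->
  exists (a1 a2 b1 b2 D : R) (N0 : nat),
    0 < a1 /\ 0 < a2 /\ 0 < b1 /\ 0 < b2 /\ 0 <= D /\
    forall (n : nat) (k : R),
      (N0 <= n)%nat -> 0 < k -> k <= INR n / 2 ->
      c1 <= INR (t n) - INR n / k <= c2 ->
      (exists dk : R,
          is_derive (fun k' => Lhat0 (INR n) k' (t n)) k dk /\
          a1 * ln (INR n) ^ 3 / INR n <= dk <= a2 * ln (INR n) ^ 3 / INR n) /\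
      (exists dn : R,
          is_derive (fun n' => Lhat0 n' k (t n)) (INR n) dn /\
          - (b2 * ln (INR n) ^ 2 / INR n) <= dn <= - (b1 * ln (INR n) ^ 2 / INR n)) /\
      (exists dK : R,
          is_derive (fun k' => L0 (INR n) k' (t n)) k dK /\
          Rabs (dK - 2 / ln 2 * ln (INR n) ^ 2) <= D * ln (INR n) * ln (ln (INR n))).
Proof.
  intros Ht Hc1 Hc12.
  assert (hC : 0 <= C) by (eapply Rle_trans; [apply Rabs_pos | apply (Ht Nt); lia]).
  destruct (tilt_localization c1 c2 Hc1 Hc12) as (B & X & T0 & hB & hX & Hloc).
  destruct (INR_unbounded (exp (100 + 10 * (C + B + c2 + INR T0)))) as (N1 & HN1).
  exists (1 / 4), 50, (1 / 4), 10, ((6 + C) * (10 + C) + C + 78 + 5 * B + 5 * X), (Nat.max Nt N1).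
  do 5 (split; [nra|]).
  intros n k Hn Hk Hkn Hrho.
  assert (hc : 0 <= c1 <= c2) by lra.
  assert (hn : exp (100 + 10 * (C + B + c2 + INR T0)) <= INR n)
    by (pose proof (le_INR N1 n ltac:(lia)); lra).
  assert (ht := Ht n ltac:(lia)).
  assert (hk : 0 < k <= INR n / 2) by lra.
  destruct (Hloc (t n) (INR n / k) (T0_le_t hC hc hB hn ht) Hrho) as (lam & hm & hlam & hZ).
  split; [|split].
  - exact (Lhat0_derive_k_bounds hC hc hB hn ht hk Hrho hlam hm).
  - exact (Lhat0_derive_n_bounds hC hc hB hn ht hk Hrho hlam hm).
  - exact (L0_derive_k_bounds hC hc hB hn ht hk Hrho hlam hm hX hZ).
Qed.
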